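(* Consider the two-layer system $$\dot{\mathbf{q}}=\mathbf{f}_0(\mathbf{q})+\mathbf{g}_0(\mathbf{q})\boldsymbol{\xi},\qquad \dot{\boldsymbol{\xi}}=\mathbf{f}_1(\mathbf{q},\boldsymbol{\xi})+\mathbf{g}_1(\mathbf{q},\boldsymbol{\xi})\mathbf{u},$$ with $\mathbf{q}\in\mathbb{R}^n$, $\boldsymbol{\xi}\in\mathbb{R}^p$, $\mathbf{u}\in\mathbb{R}^m$ and locally Lipschitz $\mathbf{f}_0,\mathbf{g}_0,\mathbf{f}_1,\mathbf{g}_1$. Let $h_0:\mathbb{R}^n\to\mathbb{R}$ be continuously differentiable, with $\mathcal{C}_0=\{\mathbf{q}:h_0(\mathbf{q})\ge0\}$. Suppose there exist a continuously differentiable $\mathbf{k}_0:\mathbb{R}^n\to\mathbb{R}^p$ and constants $\alpha,\varepsilon>0$ such that for all $\mathbf{q}$ $$L_{\mathbf{f}_0}h_0(\mathbf{q})+L_{\mathbf{g}_0}h_0(\mathbf{q})\mathbf{k}_0(\mathbf{q})\ge-\alpha h_0(\mathbf{q})+\tfrac{1}{\varepsilon}\|L_{\mathbf{g}_0}h_0(\mathbf{q})\|^2.$$ Suppose further there exist a tracking controller $\mathbf{k}:\mathbb{R}^n\times\mathbb{R}^p\to\mathbb{R}^m$, a continuously differentiable $V:\mathbb{R}^n\times\mathbb{R}^p\to\mathbb{R}_{\ge0}$ and constants $\gamma_1,\gamma_2,\gamma,\delta>0$ such that for all $(\mathbf{q},\boldsymbol{\xi})$: $\gamma_1\|\boldsymbol{\xi}-\mathbf{k}_0(\mathbf{q})\|^2\le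 V(\mathbf{q},\boldsymbol{\xi})\le\gamma_2\|\boldsymbol{\xi}-\mathbf{k}_0(\mathbf{q})\|^2$ and $\dot V(\mathbf{q},\boldsymbol{\xi})\le-\gamma V(\mathbf{q},\boldsymbol{\xi})+\delta$ along the closed-loop system with $\mathbf{u}=\mathbf{k}(\mathbf{q},\boldsymbol{\xi})$. Let $\mu>0$, $$h(\mathbf{q},\boldsymbol{\xi})=h_0(\mathbf{q})-\frac{1}{\mu\gamma_1}\Big(V(\mathbf{q},\boldsymbol{\xi})-\frac{\delta}{\alpha}\Big),\qquad \mathcal{C}=\{(\mathbf{q},\boldsymbol{\xi}):h(\mathbf{q},\boldsymbol{\xi})\ge0\}.$$ If $\gamma\ge\alpha+\frac{\varepsilon\mu}{4}$, then $\mathcal{C}$ is forward invariant for the closed-loop system with $\mathbf{u}=\mathbf{k}(\mathbf{q},\boldsymbol{\xi})$.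
   Context: $L_{\mathbf{f}_0}h_0=\nabla h_0\cdot\mathbf{f}_0$, $L_{\mathbf{g}_0}h_0=\nabla h_0^\top\mathbf{g}_0$; $\dot V$ denotes the derivative of $V$ along the closed-loop vector field. A set is forward invariant if every closed-loop trajectory starting in it remains in it on its maximal interval of existence. *)

From HB Require Import structures.
From mathcomp Require Import all_boot all_order all_algebra.
From mathcomp Require Import all_classical all_reals all_analysis.
Set Implicit Arguments. Unset Strict Implicit. Unset Printing Implicit Defensive.
Import Order.TTheory GRing.Theory Num.Theory.
Import numFieldNormedType.Exports.
Local Open Scope classical_set_scope.
Local Open Scope ring_scope.

Section Defs.
Variable R : realType.

Definition ebasis (m : nat) (i : 'I_m) : 'cV[R]_m := delta_mx i 0.

Definition grad (m : nat) (f : 'cV[R]_m -> R) (x : 'cV[R]_m) : 'cV[R]_m :=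
  \col_i ('D_(ebasis i) f x).

Definition dotv (m : nat) (u v : 'cV[R]_m) : R := \sum_i u i 0 * v i 0.
Definition sqnorm (m : nat) (v : 'cV[R]_m) : R := dotv v v.

Definition C1 (m : nat) (f : 'cV[R]_m -> R) : Prop :=
  (forall x, differentiable f x) /\
  (forall i : 'I_m, continuous (fun x => 'D_(ebasis i) f x)).

Definition C1vec (m k : nat) (f : 'cV[R]_m -> 'cV[R]_k) : Prop :=
  forall j : 'I_k, C1 (fun x => f x j 0).

Definition stack (n p : nat) (q : 'cV[R]_n) (xi : 'cV[R]_p) : 'cV[R]_(n + p) :=
  col_mx q xi.

Definition C1_2 (n p : nat) (V : 'cV[R]_n -> 'cV[R]_p -> R) : Prop :=
  C1 (fun z : 'cV[R]_(n + p) => V (usubmx z) (dsubmx z)).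

Definition grad_q (n p : nat) (V : 'cV[R]_n -> 'cV[R]_p -> R) q xi : 'cV[R]_n :=
  grad (fun q' => V q' xi) q.
Definition grad_xi (n p : nat) (V : 'cV[R]_n -> 'cV[R]_p -> R) q xi : 'cV[R]_p :=
  grad (fun xi' => V q xi') xi.

Definition locally_lipschitz (U W : normedModType R) (f : U -> W) : Prop :=
  forall x : U, exists2 r : R, 0 < r & exists L : R, forall y z : U,
    ball x r y -> ball x r z -> `|f y - f z| <= L * `|y - z|.

(* Lie derivatives of h0 along f0 and g0: L_f0 h0 = grad h0 . f0 (scalar),
   L_g0 h0 = grad h0^T g0 (row vector in R^p, stored as column) *)
Definition Lie_f (n : nat) (h0 : 'cV[R]_n -> R) (f0 : 'cV[R]_n -> 'cV[R]_n) q : R :=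
  dotv (grad h0 q) (f0 q).
Definition Lie_g (n p : nat) (h0 : 'cV[R]_n -> R) (g0 : 'cV[R]_n -> 'M[R]_(n, p)) q
  : 'cV[R]_p := (g0 q)^T *m grad h0 q.

Definition qdot (n p : nat) (f0 : 'cV[R]_n -> 'cV[R]_n) (g0 : 'cV[R]_n -> 'M[R]_(n, p))
  q xi : 'cV[R]_n := f0 q + g0 q *m xi.
Definition xidot (n p m : nat) (f1 : 'cV[R]_n -> 'cV[R]_p -> 'cV[R]_p)
  (g1 : 'cV[R]_n -> 'cV[R]_p -> 'M[R]_(p, m)) (k : 'cV[R]_n -> 'cV[R]_p -> 'cV[R]_m)
  q xi : 'cV[R]_p := f1 q xi + g1 q xi *m k q xi.

Definition Vdot (n p m : nat) f0 g0 f1 g1 k (V : 'cV[R]_n -> 'cV[R]_p -> R) q xi : R :=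
  dotv (grad_q V q xi) (@qdot n p f0 g0 q xi)
  + dotv (grad_xi V q xi) (@xidot n p m f1 g1 k q xi).

Definition cl_solution (n p m : nat) f0 g0 f1 g1 k (T : R)
  (qt : R -> 'cV[R]_n) (xit : R -> 'cV[R]_p) : Prop :=
  {within `[0, T], continuous qt} /\ {within `[0, T], continuous xit} /\
  (forall t, 0 < t < T ->
     is_derive t 1 qt (@qdot n p f0 g0 (qt t) (xit t)) /\
     is_derive t 1 xit (@xidot n p m f1 g1 k (qt t) (xit t))).

(* forward invariance of {(q,xi) | S q xi} for the closed-loop system: every
   closed-loop trajectory starting in the set stays in it on its interval of
   existence (any [0,T] contained in it). *)
Definition forward_invariant (n p m : nat) f0 g0 f1 g1 k
  (S : 'cV[R]_n -> 'cV[R]_p -> Prop) : Prop :=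
  forall (T : R) qt xit, 0 <= T -> @cl_solution n p m f0 g0 f1 g1 k T qt xit ->
    S (qt 0) (xit 0) -> forall t, 0 <= t <= T -> S (qt t) (xit t).

End Defs.

(* Along the closed loop, h decays no faster than -alpha h.  With e = xi - k0(q),
   the rate of h contains the cross term L_g0 h0 . e; Young's inequality bounds it
   below by -|L_g0 h0|^2 / eps, which the condition on k0 compensates, and by
   -eps |e|^2 / 4, which the surplus gamma - alpha >= eps mu / 4 in the decay of V
   compensates because V >= gamma1 |e|^2 and (mu gamma1)^-1 is the weight of V in h.
   Then s |-> exp(alpha s) h(q(s), xi(s)) is nondecreasing, so h stays nonnegative. *)

From HB Require Import structures.
From mathcomp Require Import all_boot all_order all_algebra.
From mathcomp Require Import all_classical all_reals all_analysis.
From mathcomp Require Import ring lra.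
Import Order.TTheory GRing.Theory Num.Theory.
Import numFieldNormedType.Exports.
Local Open Scope classical_set_scope.
Local Open Scope ring_scope.

Set Implicit Arguments.
Unset Strict Implicit.
Unset Printing Implicit Defensive.

Section inner_product.
Variables (R : realType) (k : nat).
Implicit Types (u v w : 'cV[R]_k) (c : R).

Lemma dotvC u v : dotv u v = dotv v u.
Proof. by apply: eq_bigr => i _; rewrite mulrC. Qed.

Lemma dotvDr u v w : dotv u (v + w) = dotv u v + dotv u w.
Proof. by rewrite /dotv -big_split; apply: eq_bigr => i _; rewrite mxE mulrDr. Qed.

Lemma dotvDl u v w : dotv (v + w) u = dotv v u + dotv w u.
Proof. by rewrite dotvC dotvDr !(dotvC u). Qed.

Lemma dotvZr c u v : dotv u (c *: v) = c * dotv u v.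
Proof. by rewrite /dotv big_distrr; apply: eq_bigr => i _; rewrite mxE mulrCA. Qed.

Lemma dotvZl c u v : dotv (c *: u) v = c * dotv u v.
Proof. by rewrite dotvC dotvZr dotvC. Qed.

Lemma dotv_mulmx l (M : 'M[R]_(k, l)) u (v : 'cV[R]_l) :
  dotv u (M *m v) = dotv (M^T *m u) v.
Proof.
have dotv_tr k' (x y : 'cV[R]_k') : dotv x y = (x^T *m y) 0 0.
  by rewrite mxE; apply: eq_bigr => i _; rewrite mxE.
by rewrite !dotv_tr mulmxA trmx_mul trmxK.
Qed.

Lemma sqnorm_ge0 u : 0 <= sqnorm u.
Proof. by apply: sumr_ge0 => i _; rewrite -expr2 sqr_ge0. Qed.

Lemma dotv_ge_young (eps : R) u v : 0 < eps ->
  - (eps^-1 * sqnorm u) - eps / 4 * sqnorm v <= dotv u v.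
Proof.
move=> eps0.
have square : (4 * eps)^-1 * sqnorm (2 *: u + eps *: v)
              = eps^-1 * sqnorm u + dotv u v + eps / 4 * sqnorm v.
  rewrite /sqnorm dotvDl !dotvDr !dotvZl !dotvZr (dotvC v u).
  by field; rewrite gt_eqF.
have : 0 <= (4 * eps)^-1 * sqnorm (2 *: u + eps *: v).
  by rewrite mulr_ge0 ?sqnorm_ge0 // invr_ge0 mulr_ge0 // ltW.
by rewrite square; lra.
Qed.

End inner_product.

Section comparison.
Variable R : realType.

Lemma ge0_derive_ge_linear (H dH : R -> R) (alpha a b : R) : a <= b ->
  {within `[a, b], continuous H} ->
  (forall s, s \in `]a, b[ -> is_derive s 1 H (dH s)) ->
  (forall s, s \in `]a, b[ -> - alpha * H s <= dH s) ->
  0 <= H a -> 0 <= H b.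
Proof.
move=> ab cH dH_H dH_ge H0.
pose E s := expR (alpha * s).
have E_derive (s : R) : is_derive s 1 E (E s * alpha).
  apply: (is_derive1_comp (f := expR) (g := fun s : R => alpha * s)).
  exact: is_derive_eq (is_deriveZ alpha (is_derive_id s 1)) (mulr1 _).
have g_derive (s : R) :
    s \in `]a, b[ -> is_derive s 1 (E * H) (E s * (alpha * H s + dH s)).
  move=> sab; apply: is_derive_eq (is_deriveM (E_derive s) (dH_H s sab)) _.
  rewrite /GRing.scale /=; ring.
have E_cont : continuous E.
  move=> s; apply: continuous_comp; last exact: continuous_expR.
  by apply: cvgM; [exact: cvg_cst | exact: cvg_id].
have : (E * H) a <= (E * H) b.
  apply: (ger0_derive1_ndecr _ _ _ (lexx a) ab (lexx b)).
  - by move=> s /g_derive [].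
  - move=> s sab; have gd := g_derive s sab; rewrite derive1E derive_val.
    rewrite mulr_ge0 //; first exact/ltW/expR_gt0.
    by have := dH_ge s sab; lra.
  - move=> s; apply: cvgM; last exact: cH.
    exact: (continuous_subspaceT E_cont).
rewrite /= => le_ab.
have := le_trans (mulr_ge0 (ltW (expR_gt0 _)) H0) le_ab.
by rewrite pmulr_rge0 // expR_gt0.
Qed.
End comparison.

Section stacked_calculus.
Variable R : realType.

Lemma cV_sum_ebasis k (v : 'cV[R]_k) : v = \sum_i v i 0 *: ebasis R i.
Proof.
by rewrite {1}(matrix_sum_delta v); apply: eq_bigr => i _; rewrite big_ord1.
Qed.

Lemma diff_dotv_grad k (f : 'cV[R]_k -> R) x v :
  differentiable f x -> 'd f x v = dotv (grad f x) v.
Proof.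
move=> df; rewrite {1}(cV_sum_ebasis v) linear_sum dotvC.
by apply: eq_bigr => i _; rewrite linearZ /= -deriveE // mxE.
Qed.

Lemma col_mx_sum_ebasis n p (a : 'cV[R]_n) (b : 'cV[R]_p) :
  col_mx a b = \sum_i a i 0 *: col_mx (ebasis R i) 0
             + \sum_j b j 0 *: col_mx 0 (ebasis R j).
Proof.
have sum_col k (F : 'I_k -> 'cV[R]_n) (G : 'I_k -> 'cV[R]_p) :
    \sum_i col_mx (F i) (G i) = col_mx (\sum_i F i) (\sum_i G i).
  by elim/big_rec3: _ => [|i x y z _ ->]; rewrite ?col_mx0 ?add_col_mx.
rewrite (eq_bigr (fun i => col_mx (a i 0 *: ebasis R i) 0)); last first.
  by move=> i _; rewrite scale_col_mx scaler0.
rewrite [X in _ + X](eq_bigr (fun j => col_mx 0 (b j 0 *: ebasis R j))); last first.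
  by move=> j _; rewrite scale_col_mx scaler0.
by rewrite !sum_col !big1_eq -!cV_sum_ebasis add_col_mx addr0 add0r.
Qed.

Definition uncurry_cV n p (V : 'cV[R]_n -> 'cV[R]_p -> R) (z : 'cV[R]_(n + p)) : R :=
  V (usubmx z) (dsubmx z).

Section partial_derivatives.
Variables (n p : nat) (V : 'cV[R]_n -> 'cV[R]_p -> R) (q : 'cV[R]_n) (xi : 'cV[R]_p).

Lemma derive_partial_q (a : 'cV[R]_n) :
  'D_a (fun q' => V q' xi) q = 'D_(col_mx a 0) (uncurry_cV V) (col_mx q xi).
Proof.
rewrite /derive; congr lim; apply: f_equal2 => //; apply/funext => h /=.
rewrite /uncurry_cV scale_col_mx scaler0 add_col_mx ?addr0 ?add0r.
by rewrite !col_mxKu !col_mxKd.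
Qed.

Lemma derive_partial_xi (b : 'cV[R]_p) :
  'D_b (fun xi' => V q xi') xi = 'D_(col_mx 0 b) (uncurry_cV V) (col_mx q xi).
Proof.
rewrite /derive; congr lim; apply: f_equal2 => //; apply/funext => h /=.
rewrite /uncurry_cV scale_col_mx scaler0 add_col_mx ?addr0 ?add0r.
by rewrite !col_mxKu !col_mxKd.
Qed.

Lemma diff_uncurry_cV (a : 'cV[R]_n) (b : 'cV[R]_p) :
  differentiable (uncurry_cV V) (col_mx q xi) ->
  'd (uncurry_cV V) (col_mx q xi) (col_mx a b)
    = dotv (grad_q V q xi) a + dotv (grad_xi V q xi) b.
Proof.
move=> dV; rewrite [col_mx a b]col_mx_sum_ebasis linearD !linear_sum.
rewrite /grad_q /grad_xi !(dotvC _ a) !(dotvC _ b).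
congr (_ + _); apply: eq_bigr => i _; rewrite linearZ /= -deriveE // mxE.
  by rewrite derive_partial_q.
by rewrite derive_partial_xi.
Qed.

End partial_derivatives.

Lemma is_derive_col_mx n p (u : R -> 'cV[R]_n) (w : R -> 'cV[R]_p) (s : R) a b :
  is_derive s 1 u a -> is_derive s 1 w b ->
  is_derive s 1 (fun s => col_mx (u s) (w s)) (col_mx a b).
Proof.
move=> du dw.
have col_u i j : (fun s => col_mx (u s) (w s) (lshift p i) j) = (fun s => u s i j).
  by apply/funext => s'; rewrite col_mxEu.
have col_w i j : (fun s => col_mx (u s) (w s) (rshift n i) j) = (fun s => w s i j).
  by apply/funext => s'; rewrite col_mxEd.
have dcol : derivable (fun s => col_mx (u s) (w s)) s 1.
  apply/derivable_mxP => i j; case: (split_ordP i) => i' ->.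
    by rewrite col_u; apply: (derivable_mxP _ _ _).1.
  by rewrite col_w; apply: (derivable_mxP _ _ _).1.
apply: DeriveDef => //; rewrite derive_mx //.
apply/matrixP => i j; rewrite mxE; case: (split_ordP i) => i' ->.
  by rewrite col_u col_mxEu -(@derive_val _ _ _ _ _ _ _ du) derive_mx // mxE.
by rewrite col_w col_mxEd -(@derive_val _ _ _ _ _ _ _ dw) derive_mx // mxE.
Qed.

Lemma is_derive_diff_comp k (f : 'cV[R]_k -> R) (w : R -> 'cV[R]_k) (s : R) dw :
  is_derive s 1 w dw -> differentiable f (w s) ->
  is_derive s 1 (f \o w) ('d f (w s) dw).
Proof.
move=> Dw df; have dw_s : differentiable w s by apply/derivable1_diffP.
have dfw := differentiable_comp dw_s df.
apply: DeriveDef; first exact/derivable1_diffP.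
by rewrite deriveE // diff_comp //= -(deriveE _ dw_s) (@derive_val _ _ _ _ _ _ _ Dw).
Qed.

Lemma within_continuous_col_mx n p (A : set R)
    (u : R -> 'cV[R]_n) (w : R -> 'cV[R]_p) :
  {within A, continuous u} -> {within A, continuous w} ->
  {within A, continuous (fun s => col_mx (u s) (w s))}.
Proof.
move=> cu cw s.
have /cvg_mx_entourageP u_s := cu s; have /cvg_mx_entourageP w_s := cw s.
apply/cvg_mx_entourageP => E entE; have := u_s E entE; have := w_s E entE.
rewrite !near_map; apply: filterS2 => s' w_s' u_s' i j.
by case: (split_ordP i) => i' ->; rewrite ?col_mxEu ?col_mxEd.
Qed.

End stacked_calculus.

Lemma composite_barrier_rate (R : realType) p (L kappa xi : 'cV[R]_p)
    (h Lf Vv Vd alpha eps gamma1 gamma delta mu : R) :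
  0 < alpha -> 0 < eps -> 0 < gamma1 -> 0 < mu -> alpha + eps * mu / 4 <= gamma ->
  - alpha * h + eps^-1 * sqnorm L <= Lf + dotv L kappa ->
  gamma1 * sqnorm (xi - kappa) <= Vv ->
  Vd <= - gamma * Vv + delta ->
  - alpha * (h - (mu * gamma1)^-1 * (Vv - delta / alpha))
    <= Lf + dotv L xi - (mu * gamma1)^-1 * Vd.
Proof.
move=> alpha0 eps0 gamma1_0 mu0 gamma_ge rate_h V_ge Vd_le.
set c := (mu * gamma1)^-1; have c0 : 0 < c by rewrite invr_gt0 mulr_gt0.
have young := dotv_ge_young L (xi - kappa) eps0.
have split_xi : dotv L xi = dotv L kappa + dotv L (xi - kappa).
  by rewrite -dotvDr addrC subrK.
have c_delta : alpha * (c * (delta / alpha)) = c * delta by field; rewrite gt_eqF.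
have c_Vd : c * Vd <= c * (- gamma * Vv + delta) by rewrite ler_wpM2l // ltW.
have surplus : eps / 4 * sqnorm (xi - kappa) <= c * (gamma - alpha) * Vv.
  have Vv0 : 0 <= Vv.
    exact: le_trans (mulr_ge0 (ltW gamma1_0) (sqnorm_ge0 _)) V_ge.
  have -> : eps / 4 * sqnorm (xi - kappa)
            = c * (eps * mu / 4) * (gamma1 * sqnorm (xi - kappa)).
    by rewrite /c; field; rewrite ?gt_eqF.
  have k_gt0 : 0 < c * (eps * mu / 4) by rewrite !mulr_gt0.
  apply: (@le_trans _ _ (c * (eps * mu / 4) * Vv)); first by rewrite ler_wpM2l // ltW.
  by rewrite ler_wpM2r // ler_wpM2l ?lerBrDl // ltW.
rewrite split_xi; lra.
Qed.

Section closed_loop.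
Variables (R : realType) (n p m : nat).
Variables (f0 : 'cV[R]_n -> 'cV[R]_n) (g0 : 'cV[R]_n -> 'M[R]_(n, p)).
Variable f1 : 'cV[R]_n -> 'cV[R]_p -> 'cV[R]_p.
Variable g1 : 'cV[R]_n -> 'cV[R]_p -> 'M[R]_(p, m).
Variable k : 'cV[R]_n -> 'cV[R]_p -> 'cV[R]_m.

Lemma dotv_grad_qdot (h0 : 'cV[R]_n -> R) q xi :
  dotv (grad h0 q) (qdot f0 g0 q xi) = Lie_f h0 f0 q + dotv (Lie_g h0 g0 q) xi.
Proof. by rewrite /qdot dotvDr dotv_mulmx. Qed.

Lemma forward_invariant_composite_barrier (h0 : 'cV[R]_n -> R)
    (V : 'cV[R]_n -> 'cV[R]_p -> R) (alpha c b : R) :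
  (forall q, differentiable h0 q) -> (forall z, differentiable (uncurry_cV V) z) ->
  (forall q xi, - alpha * (h0 q - c * (V q xi - b))
     <= Lie_f h0 f0 q + dotv (Lie_g h0 g0 q) xi - c * Vdot f0 g0 f1 g1 k V q xi) ->
  forward_invariant f0 g0 f1 g1 k (fun q xi => 0 <= h0 q - c * (V q xi - b)).
Proof.
move=> dh0 dV rate T qt xit _ [cq [cxi sol]] init t /andP[t_ge0 tT].
pose z s := col_mx (qt s) (xit s).
pose H := (h0 \o qt) - c *: (uncurry_cV V \o z - cst b).
have H_E s : H s = h0 (qt s) - c * (V (qt s) (xit s) - b).
  by rewrite /H !fctE /uncurry_cV /z col_mxKu col_mxKd.
rewrite -H_E.
apply: (ge0_derive_ge_linear (alpha := alpha) (a := 0)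
  (dH := fun s => Lie_f h0 f0 (qt s) + dotv (Lie_g h0 g0 (qt s)) (xit s)
                  - c * Vdot f0 g0 f1 g1 k V (qt s) (xit s))) => //.
- have cH : {within `[0, T], continuous H}.
    move=> s; apply: cvgB.
      exact: cvg_comp _ _ (cq s) (differentiable_continuous (dh0 _)).
    apply: cvgZ; first exact: cvg_cst.
    apply: cvgB; last exact: cvg_cst.
    apply: (@cvg_comp _ _ _ z (uncurry_cV V) _ (nbhs (z s))).
      exact: within_continuous_col_mx cq cxi s.
    exact: differentiable_continuous (dV (z s)).
  apply: continuous_subspaceW cH => s /=; rewrite !in_itv /= => /andP[-> st].
  exact: le_trans st tT.
- move=> s; rewrite in_itv /= => /andP[s_gt0 st].
  have /sol[dq dxi] : 0 < s < T by rewrite s_gt0 (lt_le_trans st tT).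
  have dh := is_derive_diff_comp dq (dh0 (qt s)).
  rewrite diff_dotv_grad // dotv_grad_qdot in dh.
  have dVz := is_derive_diff_comp (is_derive_col_mx dq dxi) (dV (z s)).
  rewrite diff_uncurry_cV // in dVz.
  have dVb := is_deriveB dVz (is_derive_cst b s 1).
  by apply: is_derive_eq (is_deriveB dh (is_deriveZ c dVb)) _; rewrite subr0.
- by move=> s _; rewrite H_E; exact: rate.
by rewrite H_E.
Qed.

End closed_loop.

Theorem theorem13 (R : realType) (n p m : nat)
  (f0 : 'cV[R]_n -> 'cV[R]_n) (g0 : 'cV[R]_n -> 'M[R]_(n, p))
  (f1 : 'cV[R]_n -> 'cV[R]_p -> 'cV[R]_p)
  (g1 : 'cV[R]_n -> 'cV[R]_p -> 'M[R]_(p, m))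
  (h0 : 'cV[R]_n -> R) (k0 : 'cV[R]_n -> 'cV[R]_p)
  (k : 'cV[R]_n -> 'cV[R]_p -> 'cV[R]_m)
  (V : 'cV[R]_n -> 'cV[R]_p -> R)
  (alpha eps gamma1 gamma2 gamma delta mu : R) :
  locally_lipschitz f0 -> locally_lipschitz g0 ->
  locally_lipschitz (fun z : 'cV[R]_n * 'cV[R]_p => f1 z.1 z.2) ->
  locally_lipschitz (fun z : 'cV[R]_n * 'cV[R]_p => g1 z.1 z.2) ->
  C1 h0 -> C1vec k0 -> 0 < alpha -> 0 < eps ->
  (forall q, Lie_f h0 f0 q + dotv (Lie_g h0 g0 q) (k0 q)
             >= - alpha * h0 q + eps^-1 * sqnorm (Lie_g h0 g0 q)) ->
  C1_2 V -> (forall q xi, 0 <= V q xi) ->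
  0 < gamma1 -> 0 < gamma2 -> 0 < gamma -> 0 < delta ->
  (forall q xi, gamma1 * sqnorm (xi - k0 q) <= V q xi /\
                V q xi <= gamma2 * sqnorm (xi - k0 q)) ->
  (forall q xi, Vdot f0 g0 f1 g1 k V q xi <= - gamma * V q xi + delta) ->
  0 < mu ->
  gamma >= alpha + eps * mu / 4 ->
  forward_invariant f0 g0 f1 g1 k
    (fun q xi => 0 <= h0 q - (mu * gamma1)^-1 * (V q xi - delta / alpha)).
Proof.
move=> _ _ _ _ [dh0 _] _ alpha0 eps0 rate_h0 [dV _] _ gamma1_0 _ _ _ V_sandwich
  Vdot_le mu0 gamma_ge.
apply: forward_invariant_composite_barrier dh0 dV _ => q xi.
exact: composite_barrier_rate (rate_h0 q) (V_sandwich q xi).1 (Vdot_le q xi).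
Qed.
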